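(* Let $m\ge n\ge 1$ be integers and let $$T_{m,n}(z)=\frac{(m-n) z^2 +2 (m+n) z +m-n}{(m+n) z^2 +2(m-n)z +m+n},$$ regarded as a rational map of the Riemann sphere. Let $J_{m,n}$ denote the Julia set of $T_{m,n}$. Then: (1) If $m=n$, then $J_{m,m}$ is the imaginary axis. (2) If $m>n\ge 1$, then $J_{m,n}$ is the circle $$J_{m,n}=\left\{z\in\mathbb{C}: \left|z+\frac{m^2+n^2}{m^2-n^2}\right|=\frac{2mn}{m^2-n^2}\right\}.$$
   Context: The map $T_{m,n}$ is the rational function obtained by applying Schröder's root-finding method $S_f(z)=z-\dfrac{f(z)f'(z)}{f'(z)^2-f(z)f''(z)}$ to the polynomial $f(z)=(z-1)^m(z+1)^n$ (equivalently, the affine conjugate of Schröder's method for $(z-a)^m(z-b)^n$ moving $a$ to $1$ and $b$ to $-1$). The Julia set of a rational map is the standard one from complex dynamics (the complement of the set of points where the family of iterates is normal). *)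

From Stdlib Require Import Reals.
From Coquelicot Require Import Coquelicot.
Open Scope R_scope.

(* The Riemann sphere: [Some z] is the finite point z, [None] is infinity. *)
Definition sphere : Type := option C.

Definition chordal (x y : sphere) : R :=
  match x, y with
  | Some z, Some w =>
      2 * Cmod (Cminus z w) / sqrt ((1 + Cmod z ^ 2) * (1 + Cmod w ^ 2))
  | Some z, None | None, Some z => 2 / sqrt (1 + Cmod z ^ 2)
  | None, None => 0
  end.

Definition sphere_open (U : sphere -> Prop) : Prop :=
  forall x, U x -> exists r, 0 < r /\ forall y, chordal x y < r -> U y.

Definition loc_unif_cvg (U : sphere -> Prop) (g : nat -> sphere -> sphere)
  (h : sphere -> sphere) : Prop :=
  forall x, U x -> exists r, 0 < r /\
    forall eps, 0 < eps -> exists N : nat, forall j, (N <= j)%nat ->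
      forall y, U y -> chordal x y < r -> chordal (g j y) (h y) < eps.

Definition normal_iterates (f : sphere -> sphere) (U : sphere -> Prop) : Prop :=
  forall s : nat -> nat, exists (phi : nat -> nat) (h : sphere -> sphere),
    (forall j, (phi j < phi (S j))%nat) /\
    loc_unif_cvg U (fun j => Nat.iter (s (phi j)) f) h.

Definition fatou (f : sphere -> sphere) (x : sphere) : Prop :=
  exists U, sphere_open U /\ U x /\ normal_iterates f U.

Definition julia (f : sphere -> sphere) (x : sphere) : Prop := ~ fatou f x.

(* T_{m,n}(z) = ((m-n) z^2 + 2(m+n) z + (m-n)) / ((m+n) z^2 + 2(m-n) z + (m+n))
   as a map of the sphere: poles go to infinity, infinity goes to (m-n)/(m+n).
   (Numerator and denominator have no common root when m,n >= 1.) *)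
Definition T_mn (m n : nat) (x : sphere) : sphere :=
  let a : C := RtoC (INR m - INR n) in
  let b : C := RtoC (INR m + INR n) in
  match x with
  | None => Some (Cdiv a b)
  | Some z =>
      let P := Cplus (Cplus (Cmult a (Cmult z z)) (Cmult (RtoC 2) (Cmult b z))) a in
      let Q := Cplus (Cplus (Cmult b (Cmult z z)) (Cmult (RtoC 2) (Cmult a z))) b in
      if Req_EM_T (Cmod Q) 0 then None else Some (Cdiv P Q)
  end.

(* Write w = (z - 1)/(z + 1).  Since P - Q = -2n (z - 1)^2 and P + Q = 2m (z + 1)^2 for
   T_{m,n} = P/Q, the map T_{m,n} becomes w |-> -(n/m) w^2, so |w|^2 evolves by
   rho |-> (n/m)^2 rho^2.  We follow rho through the bounded potential
   pot = rho/(1 + rho), which is an affine function of the first stereographic coordinate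
   and hence Lipschitz for the chordal metric.  Below the critical level
   pcrit = m^2/(m^2 + n^2) (i.e. |w| < m/n) the iterates converge uniformly to 1, above it
   to -1, which gives Fatou points.  A point on the level is approached by points below it
   whose orbits stay near the level for as long as we like before falling towards 1; a
   locally uniform limit of iterates cannot exist there, since it would force the potential
   of these orbits to be nearly constant along the subsequence.  The level set
   n^2 |z - 1|^2 = m^2 |z + 1|^2 is the imaginary axis when m = n and an Apollonius circle
   otherwise. *)

From Stdlib Require Import Reals Lra Lia Psatz Classical IndefiniteDescription.
From Coquelicot Require Import Coquelicot.
Open Scope R_scope.

(** * The chordal metric *)

Definition stereo (x : sphere) : R * R * R :=
  match x with
  | Some z =>
      let d := 1 + Cmod z ^ 2 in (2 * Re z / d, 2 * Im z / d, (Cmod z ^ 2 - 1) / d)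
  | None => (0, 0, 1)
  end.

Definition dist3 (u v : R * R * R) : R :=
  let '(u1, u2, u3) := u in let '(v1, v2, v3) := v in
  sqrt ((u1 - v1) ^ 2 + (u2 - v2) ^ 2 + (u3 - v3) ^ 2).

Lemma stereo_unit (x : sphere) :
  let '(u1, u2, u3) := stereo x in u1 ^ 2 + u2 ^ 2 + u3 ^ 2 = 1.
Proof.
  destruct x as [z|]; cbn [stereo]; [|lra].
  rewrite Cmod2_alt; destruct z as [a b]; cbn [Re Im fst snd].
  field; nra.
Qed.

Lemma sqrt_eq_of_sq (u v : R) : 0 <= u -> v = u ^ 2 -> sqrt v = u.
Proof. intros Hu ->; apply sqrt_pow2, Hu. Qed.

Lemma chordal_stereo (x y : sphere) : chordal x y = dist3 (stereo x) (stereo y).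
Proof.
  destruct x as [z|], y as [w|]; cbn [chordal stereo dist3].
  - symmetry; apply sqrt_eq_of_sq.
    + apply Rmult_le_pos; [pose proof (Cmod_ge_0 (z - w)); lra|].
      apply Rlt_le, Rinv_0_lt_compat, sqrt_lt_R0; nra.
    + assert (Hs := pow2_sqrt ((1 + Cmod z ^ 2) * (1 + Cmod w ^ 2))).
      assert (0 < sqrt ((1 + Cmod z ^ 2) * (1 + Cmod w ^ 2))) by (apply sqrt_lt_R0; nra).
      revert Hs H; set (s := sqrt _); intros Hs Hpos.
      replace ((2 * Cmod (z - w) / s) ^ 2) with (4 * Cmod (z - w) ^ 2 / s ^ 2) by (field; lra).
      rewrite Hs by nra; rewrite !Cmod2_alt.
      destruct z as [a b], w as [c d]; cbn [Re Im fst snd Cminus Cplus Copp].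
      field; nra.
  - symmetry; apply sqrt_eq_of_sq.
    + apply Rlt_le, Rdiv_lt_0_compat, sqrt_lt_R0; nra.
    + assert (Hs := pow2_sqrt (1 + Cmod z ^ 2)).
      assert (0 < sqrt (1 + Cmod z ^ 2)) by (apply sqrt_lt_R0; nra).
      replace ((2 / sqrt (1 + Cmod z ^ 2)) ^ 2) with (4 / sqrt (1 + Cmod z ^ 2) ^ 2)
        by (field; lra).
      rewrite Hs by nra; rewrite Cmod2_alt; destruct z as [a b]; cbn [Re Im fst snd].
      field; nra.
  - symmetry; apply sqrt_eq_of_sq.
    + apply Rlt_le, Rdiv_lt_0_compat, sqrt_lt_R0; nra.
    + assert (Hs := pow2_sqrt (1 + Cmod w ^ 2)).
      assert (0 < sqrt (1 + Cmod w ^ 2)) by (apply sqrt_lt_R0; nra).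
      replace ((2 / sqrt (1 + Cmod w ^ 2)) ^ 2) with (4 / sqrt (1 + Cmod w ^ 2) ^ 2)
        by (field; lra).
      rewrite Hs by nra; rewrite Cmod2_alt; destruct w as [a b]; cbn [Re Im fst snd].
      field; nra.
  - rewrite !Rminus_diag, pow_i, !Rplus_0_l, sqrt_0 by lia; reflexivity.
Qed.

Lemma chordal_refl (x : sphere) : chordal x x = 0.
Proof.
  destruct x as [z|]; cbn [chordal]; [|reflexivity].
  unfold Cminus; rewrite Cplus_opp_r, Cmod_0; unfold Rdiv; ring.
Qed.

Lemma chordal_le_Cmod (z w : C) : chordal (Some z) (Some w) <= 2 * Cmod (z - w).
Proof.
  cbn [chordal]; assert (h := Cmod_ge_0 (z - w)).
  assert (1 <= sqrt ((1 + Cmod z ^ 2) * (1 + Cmod w ^ 2))).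
  { rewrite <- sqrt_1 at 1; apply sqrt_le_1_alt.
    pose proof (pow2_ge_0 (Cmod z)); pose proof (pow2_ge_0 (Cmod w)).
    set (u := Cmod z ^ 2) in *; set (v := Cmod w ^ 2) in *; nra. }
  apply Rmult_le_reg_r with (sqrt ((1 + Cmod z ^ 2) * (1 + Cmod w ^ 2))); [lra|].
  unfold Rdiv; rewrite Rmult_assoc, Rinv_l by lra; nra.
Qed.

(** * The potential *)

Definition pot (x : sphere) : R := let '(u1, _, _) := stereo x in (1 - u1) / 2.

Lemma pot_range (x : sphere) : 0 <= pot x <= 1.
Proof.
  unfold pot; assert (H := stereo_unit x).
  destruct (stereo x) as [[u1 u2] u3]; nra.
Qed.

Lemma Rabs_le_sqrt_plus (a s : R) : 0 <= s -> Rabs a <= sqrt (a ^ 2 + s).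
Proof.
  intros Hs; rewrite <- sqrt_Rsqr_abs, Rsqr_pow2; apply sqrt_le_1_alt; lra.
Qed.

Lemma pot_lipschitz (x y : sphere) : Rabs (pot x - pot y) <= chordal x y.
Proof.
  rewrite chordal_stereo; unfold pot, dist3.
  destruct (stereo x) as [[u1 u2] u3], (stereo y) as [[v1 v2] v3].
  apply Rle_trans with (Rabs (u1 - v1)); [unfold Rabs; repeat destruct Rcase_abs; lra|].
  rewrite Rplus_assoc; apply Rabs_le_sqrt_plus, Rplus_le_le_0_compat; apply pow2_ge_0.
Qed.

Lemma sphere_open_pot_lt (b : R) : sphere_open (fun y => pot y < b).
Proof.
  intros y Hy; exists (b - pot y); split; [lra|].
  intros y' Hy'; pose proof (pot_lipschitz y y'); unfold Rabs in *; destruct Rcase_abs; lra.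
Qed.

Lemma sphere_open_pot_gt (b : R) : sphere_open (fun y => b < pot y).
Proof.
  intros y Hy; exists (pot y - b); split; [lra|].
  intros y' Hy'; pose proof (pot_lipschitz y y'); unfold Rabs in *; destruct Rcase_abs; lra.
Qed.

Lemma chordal_real_unit (x : sphere) (e : R) : e ^ 2 = 1 ->
  chordal x (Some (RtoC e)) = sqrt (2 * (1 - e * (1 - 2 * pot x))).
Proof.
  intros He; rewrite chordal_stereo; unfold pot, dist3; cbn [stereo].
  assert (H := stereo_unit x).
  rewrite Cmod2_alt; cbn [Re Im RtoC fst snd].
  destruct (stereo x) as [[u1 u2] u3]; f_equal.
  replace (e ^ 2 + 0 ^ 2) with 1 by (rewrite He; ring).
  replace (2 * e / (1 + 1)) with e by field.
  replace (2 * 0 / (1 + 1)) with 0 by field.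
  replace ((1 - 1) / (1 + 1)) with 0 by field.
  nra.
Qed.

Lemma chordal_one (x : sphere) : chordal x (Some (RtoC 1)) = 2 * sqrt (pot x).
Proof.
  rewrite chordal_real_unit by ring; apply sqrt_eq_of_sq.
  - pose proof (sqrt_pos (pot x)); lra.
  - rewrite Rpow_mult_distr, pow2_sqrt by apply pot_range; ring.
Qed.

Lemma chordal_neg_one (x : sphere) : chordal x (Some (RtoC (-1))) = 2 * sqrt (1 - pot x).
Proof.
  rewrite chordal_real_unit by ring; apply sqrt_eq_of_sq.
  - pose proof (sqrt_pos (1 - pot x)); lra.
  - rewrite Rpow_mult_distr, pow2_sqrt by (pose proof (pot_range x); lra); ring.
Qed.

Lemma Cmod_parallelogram (u v : C) :
  Cmod (u - v) ^ 2 + Cmod (u + v) ^ 2 = 2 * (Cmod u ^ 2 + Cmod v ^ 2).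
Proof.
  rewrite !Cmod2_alt; destruct u as [a b], v as [c d]; cbn [Re Im fst snd Cminus Cplus Copp].
  ring.
Qed.

Lemma Cmod_sub_add_pos (u v : C) : v <> 0%C -> 0 < Cmod (u - v) ^ 2 + Cmod (u + v) ^ 2.
Proof.
  intros Hv; rewrite Cmod_parallelogram.
  apply Cmod_gt_0 in Hv; pose proof (pow2_ge_0 (Cmod u)); nra.
Qed.

Lemma pot_Some (z : C) :
  pot (Some z) = Cmod (z - 1) ^ 2 / (Cmod (z - 1) ^ 2 + Cmod (z + 1) ^ 2).
Proof.
  rewrite Cmod_parallelogram; unfold pot; cbn [stereo].
  rewrite !Cmod2_alt; destruct z as [a b]; cbn [Re Im fst snd Cminus Cplus Copp RtoC].
  field; nra.
Qed.

Lemma pot_None : pot None = 1 / 2.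
Proof. unfold pot; cbn [stereo]; lra. Qed.

Lemma pot_div (P Q : C) : Q <> 0%C ->
  pot (Some (P / Q)%C) = Cmod (P - Q) ^ 2 / (Cmod (P - Q) ^ 2 + Cmod (P + Q) ^ 2).
Proof.
  intros HQ; rewrite pot_Some.
  replace (P / Q - 1)%C with ((P - Q) / Q)%C by (field; exact HQ).
  replace (P / Q + 1)%C with ((P + Q) / Q)%C by (field; exact HQ).
  rewrite !Cmod_div by exact HQ.
  assert (Hpos := Cmod_sub_add_pos P Q HQ).
  apply Cmod_gt_0 in HQ.
  set (c := Cmod Q) in *; set (s := Cmod (P - Q)) in *; set (t := Cmod (P + Q)) in *.
  replace ((s / c) ^ 2 + (t / c) ^ 2) with ((s ^ 2 + t ^ 2) / c ^ 2) by (field; lra).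
  field; split; lra.
Qed.

(** * Schröder's map on potentials *)

Definition T_num (m n : nat) (z : C) : C :=
  (RtoC (INR m - INR n) * (z * z) + RtoC 2 * (RtoC (INR m + INR n) * z)
   + RtoC (INR m - INR n))%C.

Definition T_den (m n : nat) (z : C) : C :=
  (RtoC (INR m + INR n) * (z * z) + RtoC 2 * (RtoC (INR m - INR n) * z)
   + RtoC (INR m + INR n))%C.

Lemma T_mn_Some (m n : nat) (z : C) :
  T_mn m n (Some z) =
  if Req_EM_T (Cmod (T_den m n z)) 0 then None else Some (T_num m n z / T_den m n z)%C.
Proof. reflexivity. Qed.

Lemma T_num_sub_den (m n : nat) (z : C) :
  (T_num m n z - T_den m n z = RtoC (- (2 * INR n)) * ((z - 1) * (z - 1)))%C.
Proof. unfold T_num, T_den; rewrite ?RtoC_opp, ?RtoC_minus, ?RtoC_plus, ?RtoC_mult; ring. Qed.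

Lemma T_num_add_den (m n : nat) (z : C) :
  (T_num m n z + T_den m n z = RtoC (2 * INR m) * ((z + 1) * (z + 1)))%C.
Proof. unfold T_num, T_den; rewrite ?RtoC_minus, ?RtoC_plus, ?RtoC_mult; ring. Qed.

Definition G (M N p : R) : R := N ^ 2 * p ^ 2 / (N ^ 2 * p ^ 2 + M ^ 2 * (1 - p) ^ 2).

Lemma G_ratio (M N a b : R) : 0 < M -> 0 < N -> 0 <= a -> 0 <= b -> 0 < a + b ->
  G M N (a / (a + b)) = (N * a) ^ 2 / ((N * a) ^ 2 + (M * b) ^ 2).
Proof.
  intros HM HN Ha Hb Hab; unfold G.
  replace (1 - a / (a + b)) with (b / (a + b)) by (field; lra).
  assert (0 < (N * a) ^ 2 + (M * b) ^ 2).
  { destruct (Rle_lt_or_eq_dec 0 a Ha) as [Ha'|<-].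
    - pose proof (pow2_ge_0 (M * b)); assert (0 < (N * a) ^ 2) by (apply pow_lt; nra); lra.
    - pose proof (pow2_ge_0 (N * 0)); assert (0 < (M * b) ^ 2) by (apply pow_lt; nra); lra. }
  field; lra.
Qed.

Lemma ratio_sq_scale (k u v : R) : k <> 0 ->
  (k * u) ^ 2 / ((k * u) ^ 2 + (k * v) ^ 2) = u ^ 2 / (u ^ 2 + v ^ 2).
Proof.
  intros Hk; destruct (Req_dec (u ^ 2 + v ^ 2) 0) as [H0|H0].
  - assert (u = 0) by nra; assert (v = 0) by nra; subst u v.
    rewrite Rmult_0_r; reflexivity.
  - field; split; [exact H0|].
    rewrite !Rpow_mult_distr, <- Rmult_plus_distr_l.
    apply Rmult_integral_contrapositive; split; [apply pow_nonzero|]; assumption.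
Qed.

Lemma INR_pos (k : nat) : (1 <= k)%nat -> 0 < INR k.
Proof. intros Hk; apply lt_0_INR; lia. Qed.

Section Semiconjugacy.

Variables m n : nat.
Hypothesis Hm : (1 <= m)%nat.
Hypothesis Hn : (1 <= n)%nat.

Local Notation M := (INR m).
Local Notation N := (INR n).

Lemma pot_T_regular (z : C) : T_den m n z <> 0%C ->
  pot (Some (T_num m n z / T_den m n z)%C) = G M N (pot (Some z)).
Proof.
  intros HQ; pose proof (INR_pos m Hm); pose proof (INR_pos n Hn).
  assert (Hpar := Cmod_sub_add_pos z 1 C1_nz).
  rewrite pot_div, T_num_sub_den, T_num_add_den, !Cmod_mult, !Cmod_R, Rabs_Ropp, !Rabs_pos_eq
    by (auto; lra).
  rewrite pot_Some, G_ratio by (auto; apply pow2_ge_0).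
  replace (2 * N * (Cmod (z - 1) * Cmod (z - 1))) with (2 * (N * Cmod (z - 1) ^ 2)) by ring.
  replace (2 * M * (Cmod (z + 1) * Cmod (z + 1))) with (2 * (M * Cmod (z + 1) ^ 2)) by ring.
  apply ratio_sq_scale; lra.
Qed.

Lemma pot_T_pole (z : C) : T_den m n z = 0%C -> G M N (pot (Some z)) = 1 / 2.
Proof.
  intros HQ; pose proof (INR_pos m Hm); pose proof (INR_pos n Hn).
  assert (Hpar := Cmod_sub_add_pos z 1 C1_nz).
  rewrite pot_Some, G_ratio by (auto; apply pow2_ge_0).
  set (a := Cmod (z - 1)) in *; set (b := Cmod (z + 1)) in *.
  assert (Heq : N * a ^ 2 = M * b ^ 2).
  { assert (E : (T_num m n z - T_den m n z = T_num m n z + T_den m n z)%C)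
      by (rewrite HQ; ring).
    rewrite T_num_sub_den, T_num_add_den in E; apply (f_equal Cmod) in E.
    rewrite !Cmod_mult, !Cmod_R, Rabs_Ropp, !Rabs_pos_eq in E by lra.
    fold a b in E; lra. }
  assert (Ha : 0 < a ^ 2).
  { apply Rnot_le_lt; intros Ha; assert (Ha0 : a ^ 2 = 0) by (pose proof (pow2_ge_0 a); lra).
    rewrite Ha0 in Heq, Hpar.
    assert (Hb0 : M * b ^ 2 = 0) by lra.
    apply Rmult_integral in Hb0 as [|]; lra. }
  rewrite <- Heq.
  assert (0 < (N * a ^ 2) ^ 2) by (apply pow_lt, Rmult_lt_0_compat; lra).
  field; lra.
Qed.

Lemma pot_T_infinity : pot (T_mn m n None) = G M N (pot None).
Proof.
  pose proof (INR_pos m Hm); pose proof (INR_pos n Hn).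
  cbn [T_mn]; rewrite pot_div.
  - rewrite <- RtoC_minus, <- RtoC_plus, !Cmod_R, !pow2_abs, pot_None.
    unfold G; field; nra.
  - intros e; apply RtoC_inj in e; lra.
Qed.

Lemma pot_T (x : sphere) : pot (T_mn m n x) = G M N (pot x).
Proof.
  destruct x as [z|]; [|apply pot_T_infinity].
  rewrite T_mn_Some; destruct Req_EM_T as [HQ|HQ].
  - rewrite pot_T_pole by (apply Cmod_eq_0, HQ); apply pot_None.
  - apply pot_T_regular; intros e; apply HQ; rewrite e; apply Cmod_0.
Qed.

Lemma pot_iter (k : nat) (x : sphere) :
  pot (Nat.iter k (T_mn m n) x) = Nat.iter k (G M N) (pot x).
Proof.
  induction k as [|k IH]; [reflexivity|].
  rewrite !Nat.iter_succ, pot_T; now rewrite IH.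
Qed.

End Semiconjugacy.

Section G_dynamics.

Variables M N : R.
Hypothesis HM : 0 < M.
Hypothesis HN : 0 < N.

Definition pcrit : R := M ^ 2 / (M ^ 2 + N ^ 2).

(* The square modulus of the Böttcher coordinate (n/m) w, written in terms of the potential. *)
Definition bottcher (p : R) : R := N ^ 2 * p / (M ^ 2 * (1 - p)).

Lemma G_denom_pos (p : R) : 0 < N ^ 2 * p ^ 2 + M ^ 2 * (1 - p) ^ 2.
Proof.
  destruct (Req_dec p 0) as [->|Hp].
  - assert (0 < M ^ 2) by (apply pow_lt; lra); nra.
  - apply Rplus_lt_le_0_compat.
    + apply Rmult_lt_0_compat; [apply pow_lt; lra | apply pow2_gt_0, Hp].
    + apply Rmult_le_pos; apply pow2_ge_0.
Qed.

Lemma G_continuous (p : R) : continuity_pt (G M N) p.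
Proof. unfold G; reg; apply Rgt_not_eq, G_denom_pos. Qed.

Lemma G_bounds (p : R) : 0 <= p < 1 -> 0 <= G M N p < 1.
Proof.
  intros Hp; assert (Hd := G_denom_pos p); unfold G; split.
  - apply Rdiv_le_0_compat; [|exact Hd].
    apply Rmult_le_pos; apply pow2_ge_0.
  - apply (proj1 (Rdiv_lt_1 _ _ Hd)).
    assert (0 < M ^ 2 * (1 - p) ^ 2) by (apply Rmult_lt_0_compat; apply pow_lt; lra); lra.
Qed.

Lemma iter_G_bounds (k : nat) (p : R) : 0 <= p < 1 -> 0 <= Nat.iter k (G M N) p < 1.
Proof.
  intros Hp; induction k as [|k IH]; [exact Hp|].
  rewrite Nat.iter_succ; apply G_bounds, IH.
Qed.

Lemma bottcher_nonneg (p : R) : 0 <= p < 1 -> 0 <= bottcher p.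
Proof.
  intros Hp; apply Rdiv_le_0_compat.
  - apply Rmult_le_pos; [apply pow2_ge_0 | lra].
  - apply Rmult_lt_0_compat; [apply pow_lt|]; lra.
Qed.

Lemma bottcher_G (p : R) : 0 <= p < 1 -> bottcher (G M N p) = bottcher p ^ 2.
Proof.
  intros Hp; unfold bottcher, G.
  assert (0 < (M * (1 - p)) ^ 2) by (apply pow_lt; nra).
  pose proof (pow2_ge_0 (N * p)).
  field; repeat split; lra.
Qed.

Lemma bottcher_iter (k : nat) (p : R) : 0 <= p < 1 ->
  bottcher (Nat.iter k (G M N) p) = bottcher p ^ (2 ^ k).
Proof.
  intros Hp; induction k as [|k IH]; [simpl; ring|].
  rewrite Nat.iter_succ, bottcher_G, IH by (apply iter_G_bounds, Hp).
  rewrite <- pow_mult, Nat.pow_succ_r'; f_equal; lia.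
Qed.

Lemma le_bottcher (p : R) : 0 <= p < 1 -> p <= (M / N) ^ 2 * bottcher p.
Proof.
  intros Hp; unfold bottcher.
  replace ((M / N) ^ 2 * (N ^ 2 * p / (M ^ 2 * (1 - p)))) with (p / (1 - p)) by (field; lra).
  rewrite <- Rle_div_r by lra; nra.
Qed.

Lemma bottcher_le (p q : R) : 0 <= p <= q -> q < 1 -> bottcher p <= bottcher q.
Proof.
  intros Hpq Hq.
  assert (E : bottcher q - bottcher p = N ^ 2 * (q - p) / (M ^ 2 * ((1 - p) * (1 - q))))
    by (unfold bottcher; field; lra).
  assert (0 <= N ^ 2 * (q - p) / (M ^ 2 * ((1 - p) * (1 - q)))); [|lra].
  apply Rdiv_le_0_compat.
  - apply Rmult_le_pos; [apply pow2_ge_0 | lra].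
  - apply Rmult_lt_0_compat; [apply pow_lt; lra | nra].
Qed.

Lemma bottcher_lt_1 (p : R) : p < pcrit -> p < 1 -> bottcher p < 1.
Proof.
  intros Hp Hp1.
  assert (0 < M ^ 2) by (apply pow_lt; lra); assert (0 < N ^ 2) by (apply pow_lt; lra).
  assert (E : 1 - bottcher p = (M ^ 2 + N ^ 2) * (pcrit - p) / (M ^ 2 * (1 - p)))
    by (unfold bottcher, pcrit; field; repeat split; lra).
  assert (0 < (M ^ 2 + N ^ 2) * (pcrit - p) / (M ^ 2 * (1 - p))); [|lra].
  apply Rdiv_lt_0_compat; apply Rmult_lt_0_compat; lra.
Qed.

Lemma pcrit_bounds : 0 < pcrit < 1.
Proof.
  assert (0 < M ^ 2) by (apply pow_lt; lra); assert (0 < N ^ 2) by (apply pow_lt; lra).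
  unfold pcrit; split.
  - apply Rdiv_lt_0_compat; lra.
  - rewrite <- Rdiv_lt_1 by lra; lra.
Qed.

Lemma G_pcrit : G M N pcrit = pcrit.
Proof.
  assert (0 < M ^ 2) by (apply pow_lt; lra); assert (0 < N ^ 2) by (apply pow_lt; lra).
  assert (0 < N ^ 2 * M ^ 4) by (apply Rmult_lt_0_compat; [|apply pow_lt]; lra).
  pose proof (pow2_ge_0 (M * (M ^ 2 + N ^ 2 - M ^ 2))).
  unfold G, pcrit; field; split; lra.
Qed.

Lemma G_attracts_zero (b eps : R) : 0 <= b < pcrit -> 0 < eps ->
  exists K, forall k p, (K <= k)%nat -> 0 <= p <= b -> Nat.iter k (G M N) p < eps.
Proof.
  intros Hb He; pose proof pcrit_bounds.
  set (C := (M / N) ^ 2).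
  assert (HC : 0 < C) by (apply pow_lt, Rdiv_lt_0_compat; lra).
  set (q := bottcher b).
  assert (Hq : 0 <= q < 1) by (split; [apply bottcher_nonneg | apply bottcher_lt_1]; lra).
  destruct (pow_lt_1_zero q ltac:(rewrite Rabs_pos_eq; lra) (eps / C)
    ltac:(apply Rdiv_lt_0_compat; lra)) as [K HK].
  exists K; intros k p Hk Hp.
  assert (Hk2 : (K <= 2 ^ k)%nat) by (pose proof (Nat.pow_gt_lin_r 2 k); lia).
  specialize (HK _ Hk2); rewrite Rabs_pos_eq in HK by (apply pow_le; lra).
  apply Rmult_lt_compat_l with (r := C) in HK; [|exact HC].
  replace (C * (eps / C)) with eps in HK by (field; lra).
  assert (Hp1 : 0 <= p < 1) by lra.
  apply Rle_lt_trans with (C * bottcher (Nat.iter k (G M N) p));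
    [apply le_bottcher, iter_G_bounds, Hp1|].
  rewrite bottcher_iter by exact Hp1.
  eapply Rle_lt_trans; [|exact HK].
  apply Rmult_le_compat_l; [lra|]; apply pow_incr.
  split; [apply bottcher_nonneg, Hp1 | apply bottcher_le; lra].
Qed.

End G_dynamics.

Lemma G_swap (M N p : R) : 0 < M -> 0 < N -> 1 - G M N p = G N M (1 - p).
Proof.
  intros HM HN; assert (Hd := G_denom_pos M N HM HN p).
  unfold G; replace (1 - (1 - p)) with p by ring.
  field; lra.
Qed.

Lemma iter_G_swap (M N p : R) (k : nat) : 0 < M -> 0 < N ->
  1 - Nat.iter k (G M N) p = Nat.iter k (G N M) (1 - p).
Proof.
  intros HM HN; induction k as [|k IH]; [reflexivity|].
  rewrite !Nat.iter_succ, <- IH; apply G_swap; assumption.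
Qed.

Lemma pcrit_swap (M N : R) : 0 < M -> 0 < N -> 1 - pcrit M N = pcrit N M.
Proof.
  intros HM HN; assert (0 < M ^ 2) by (apply pow_lt; lra); assert (0 < N ^ 2) by (apply pow_lt; lra).
  unfold pcrit; field; lra.
Qed.

Lemma G_attracts_one (M N b eps : R) : 0 < M -> 0 < N -> pcrit M N < b <= 1 -> 0 < eps ->
  exists K, forall k p, (K <= k)%nat -> b <= p <= 1 -> 1 - Nat.iter k (G M N) p < eps.
Proof.
  intros HM HN Hb He.
  destruct (G_attracts_zero N M HN HM (1 - b) eps) as [K HK];
    [rewrite <- pcrit_swap by assumption; lra | exact He |].
  exists K; intros k p Hk Hp; rewrite iter_G_swap by assumption; apply HK; [exact Hk | lra].
Qed.

Lemma iter_fixpoint {A : Type} (f : A -> A) (c : A) (k : nat) :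
  f c = c -> Nat.iter k f c = c.
Proof. intros Hc; induction k as [|k IH]; [reflexivity|]; rewrite Nat.iter_succ, IH; exact Hc. Qed.

Lemma continuity_pt_iter_fixpoint (f : R -> R) (c : R) (k : nat) :
  continuity_pt f c -> f c = c -> continuity_pt (Nat.iter k f) c.
Proof.
  intros Hf Hc; induction k as [|k IH]; [apply continuity_pt_id|].
  change (continuity_pt (comp f (Nat.iter k f)) c).
  apply continuity_pt_comp; [exact IH|].
  rewrite iter_fixpoint by exact Hc; exact Hf.
Qed.

Lemma continuity_pt_delta (f : R -> R) (x eps : R) : continuity_pt f x -> 0 < eps ->
  exists delta, 0 < delta /\ forall y, Rabs (y - x) < delta -> Rabs (f y - f x) < eps.
Proof.
  intros Hf He.
  destruct (proj1 (continuity_pt_locally f x) Hf (mkposreal eps He)) as [delta Hd].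
  exists delta; split; [apply cond_pos|].
  intros y Hy; apply Hd; exact Hy.
Qed.

(** * Criteria for Fatou and Julia points *)

Lemma increasing_selection (Q : nat -> nat -> Prop) :
  (forall k K, exists j, (K <= j)%nat /\ Q k j) ->
  exists phi : nat -> nat, (forall j, (phi j < phi (S j))%nat) /\ forall j, Q j (phi j).
Proof.
  intros H.
  destruct (functional_choice (fun kK j => (snd kK <= j)%nat /\ Q (fst kK) j)
    (fun kK => H (fst kK) (snd kK))) as [f Hf].
  set (phi := fix phi j := match j with O => f (O, O) | S j' => f (S j', S (phi j')) end).
  exists phi; split.
  - intros j; destruct (Hf (S j, S (phi j))) as [Hle _]; cbn [fst snd] in Hle.
    change (phi (S j)) with (f (S j, S (phi j))); lia.
  - intros [|j]; [apply (Hf (O, O)) | apply (Hf (S j, S (phi j)))].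
Qed.

Lemma increasing_ge_id (phi : nat -> nat) :
  (forall j, (phi j < phi (S j))%nat) -> forall j, (j <= phi j)%nat.
Proof. intros H j; induction j as [|j IH]; [lia|]; specialize (H j); lia. Qed.

Lemma bounded_seq_frequent_value (s : nat -> nat) (B K0 : nat) :
  (forall j, (K0 <= j)%nat -> (s j < B)%nat) ->
  exists v, forall K, exists j, (K <= j)%nat /\ s j = v.
Proof.
  revert K0; induction B as [|B IH]; intros K0 H.
  - specialize (H K0 (le_n _)); lia.
  - destruct (classic (forall K, exists j, (K <= j)%nat /\ s j = B)) as [HB|HB];
      [exists B; exact HB|].
    apply not_all_ex_not in HB as [K1 HK1].
    apply (IH (max K0 K1)); intros j Hj.
    assert (s j <> B) by (intros e; apply HK1; exists j; split; [lia | exact e]).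
    specialize (H j ltac:(lia)); lia.
Qed.

Lemma nat_seq_const_or_unbounded (s : nat -> nat) :
  exists phi : nat -> nat, (forall j, (phi j < phi (S j))%nat) /\
    ((exists v, forall j, s (phi j) = v) \/ (forall j, (j <= s (phi j))%nat)).
Proof.
  destruct (classic (forall B K, exists j, (K <= j)%nat /\ (B <= s j)%nat)) as [Hunb|Hb].
  - destruct (increasing_selection _ Hunb) as [phi [Hphi Hs]].
    exists phi; split; [exact Hphi | right; exact Hs].
  - apply not_all_ex_not in Hb as [B Hb]; apply not_all_ex_not in Hb as [K0 Hb].
    assert (Hlt : forall j, (K0 <= j)%nat -> (s j < B)%nat).
    { intros j Hj; apply Nat.nle_gt; intros HBj; apply Hb; exists j; split; assumption. }
    destruct (bounded_seq_frequent_value s B K0 Hlt) as [v Hv].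
    destruct (increasing_selection (fun _ j => s j = v) (fun _ K => Hv K)) as [phi [Hphi Hs]].
    exists phi; split; [exact Hphi | left; exists v; exact Hs].
Qed.

Lemma fatou_of_uniform_limit (f : sphere -> sphere) (U : sphere -> Prop) (c x : sphere) :
  sphere_open U -> U x ->
  (forall eps, 0 < eps -> exists K, forall k y, (K <= k)%nat -> U y ->
     chordal (Nat.iter k f y) c < eps) ->
  fatou f x.
Proof.
  intros HU Ux Hcvg; exists U; split; [exact HU | split; [exact Ux|]].
  intros s; destruct (nat_seq_const_or_unbounded s) as [phi [Hphi [[v Hv]|Hge]]].
  - exists phi, (Nat.iter v f); split; [exact Hphi|].
    intros y _; exists 1; split; [lra|]; intros eps He; exists O.
    intros j _ y' _ _; rewrite Hv, chordal_refl; exact He.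
  - exists phi, (fun _ => c); split; [exact Hphi|].
    intros y _; exists 1; split; [lra|]; intros eps He.
    destruct (Hcvg eps He) as [K HK]; exists K.
    intros j Hj y' Uy' _; apply HK; [specialize (Hge j); lia | exact Uy'].
Qed.

Lemma julia_of_oscillation (f : sphere -> sphere) (P : sphere -> R) (x : sphere) (a b : R) :
  (forall y y', Rabs (P y - P y') <= chordal y y') -> a < b ->
  (forall d K, 0 < d -> exists y, chordal x y < d /\ b <= P (Nat.iter K f y) /\
     exists k0, forall k, (k0 <= k)%nat -> P (Nat.iter k f y) <= a) ->
  julia f x.
Proof.
  intros HP Hab Hosc [U [HU [Ux Hnorm]]].
  destruct (Hnorm (fun k => k)) as [phi [h [Hphi Hcvg]]].
  destruct (Hcvg x Ux) as [r [Hr Hunif]].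
  destruct (HU x Ux) as [r' [Hr' HUx]].
  destruct (Hunif ((b - a) / 2) ltac:(lra)) as [J HJ].
  destruct (Hosc (Rmin r r') (phi J) ltac:(apply Rmin_pos; lra))
    as [y [Hxy [Hhigh [k0 Hlow]]]].
  assert (Hr1 := Rmin_l r r'); assert (Hr2 := Rmin_r r r').
  assert (Uy : U y) by (apply HUx; lra).
  set (j := max J k0).
  assert (Hj := increasing_ge_id phi Hphi j).
  assert (HyJ := HJ J (le_n _) y Uy ltac:(lra)).
  assert (Hyj := HJ j ltac:(lia) y Uy ltac:(lra)).
  assert (HPJ := HP (Nat.iter (phi J) f y) (h y)).
  assert (HPj := HP (Nat.iter (phi j) f y) (h y)).
  assert (Hlowj := Hlow (phi j) ltac:(lia)).
  (* The potential of h y would be within (b - a)/2 of a value >= b and of a value <= a. *)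
  revert HPJ HPj; unfold Rabs; do 2 destruct Rcase_abs; lra.
Qed.

(** * The critical level set *)

Lemma pot_sub_pcrit (M N : R) (z : C) : 0 < M -> 0 < N -> exists D, 0 < D /\
  N ^ 2 * Cmod (z - 1) ^ 2 - M ^ 2 * Cmod (z + 1) ^ 2 = (pot (Some z) - pcrit M N) * D.
Proof.
  intros HM HN; assert (0 < M ^ 2) by (apply pow_lt; lra); assert (0 < N ^ 2) by (apply pow_lt; lra).
  assert (Hpar := Cmod_sub_add_pos z 1 C1_nz).
  exists ((Cmod (z - 1) ^ 2 + Cmod (z + 1) ^ 2) * (M ^ 2 + N ^ 2)); split.
  - apply Rmult_lt_0_compat; lra.
  - rewrite pot_Some; unfold pcrit; field; lra.
Qed.

Lemma pot_lt_pcrit_iff (M N : R) (z : C) : 0 < M -> 0 < N ->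
  pot (Some z) < pcrit M N <-> N ^ 2 * Cmod (z - 1) ^ 2 < M ^ 2 * Cmod (z + 1) ^ 2.
Proof.
  intros HM HN; destruct (pot_sub_pcrit M N z HM HN) as [D [HD E]].
  split; intros; nra.
Qed.

Lemma pot_eq_pcrit_iff (M N : R) (z : C) : 0 < M -> 0 < N ->
  pot (Some z) = pcrit M N <-> N ^ 2 * Cmod (z - 1) ^ 2 = M ^ 2 * Cmod (z + 1) ^ 2.
Proof.
  intros HM HN; destruct (pot_sub_pcrit M N z HM HN) as [D [HD E]].
  split; intros H.
  - rewrite H, Rminus_diag, Rmult_0_l in E; lra.
  - rewrite H, Rminus_diag in E; symmetry in E.
    apply Rmult_integral in E as [E|E]; lra.
Qed.

Lemma Cmod_shift_sq (u v e : R) : Cmod ((u, v) + RtoC e)%C ^ 2 = (u + e) ^ 2 + v ^ 2.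
Proof. rewrite Cmod2_alt; cbn; ring. Qed.

Definition level_gap (M N u v : R) : R :=
  M ^ 2 * ((u + 1) ^ 2 + v ^ 2) - N ^ 2 * ((u - 1) ^ 2 + v ^ 2).

Lemma pot_lt_pcrit_coords (M N u v : R) : 0 < M -> 0 < N ->
  pot (Some (u, v)) < pcrit M N <-> 0 < level_gap M N u v.
Proof.
  intros HM HN; rewrite pot_lt_pcrit_iff by assumption.
  unfold Cminus, level_gap; rewrite <- RtoC_opp, !Cmod_shift_sq; split; intros; lra.
Qed.

Lemma pot_eq_pcrit_coords (M N u v : R) : 0 < M -> 0 < N ->
  pot (Some (u, v)) = pcrit M N <-> level_gap M N u v = 0.
Proof.
  intros HM HN; rewrite pot_eq_pcrit_iff by assumption.
  unfold Cminus, level_gap; rewrite <- RtoC_opp, !Cmod_shift_sq; split; intros; lra.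
Qed.

Lemma exists_lower_pot_near_finite (M N : R) (z : C) (d : R) : 0 < M -> 0 < N ->
  pot (Some z) = pcrit M N -> 0 < d -> exists y, chordal (Some z) y < d /\ pot y < pcrit M N.
Proof.
  intros HM HN Hz Hd; destruct z as [a b].
  assert (HM2 : 0 < M ^ 2) by (apply pow_lt; lra).
  assert (HN2 : 0 < N ^ 2) by (apply pow_lt; lra).
  set (F := level_gap M N).
  assert (HF0 : F a b = 0) by (apply pot_eq_pcrit_coords; assumption).
  (* Step along the gradient (gx, gy) of F, of length 4 M N on the level F = 0; the bound
     t <= 1/(2 N^2) keeps the quadratic term of F from cancelling the linear gain. *)
  set (gx := 2 * M ^ 2 * (a + 1) - 2 * N ^ 2 * (a - 1)).
  set (gy := 2 * (M ^ 2 - N ^ 2) * b).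
  assert (Hg : gx ^ 2 + gy ^ 2 = (4 * M * N) ^ 2).
  { replace ((4 * M * N) ^ 2) with ((4 * M * N) ^ 2 + 4 * (M ^ 2 - N ^ 2) * F a b)
      by (rewrite HF0; ring).
    unfold gx, gy, F, level_gap; ring. }
  set (t := Rmin (d / (16 * M * N)) (1 / (2 * N ^ 2))).
  assert (Ht : 0 < t) by (apply Rmin_pos; apply Rdiv_lt_0_compat; nra).
  assert (Htd : t <= d / (16 * M * N)) by apply Rmin_l.
  assert (HtN : t <= 1 / (2 * N ^ 2)) by apply Rmin_r.
  exists (Some (a + t * gx, b + t * gy)); split.
  - eapply Rle_lt_trans; [apply chordal_le_Cmod|].
    replace (Cmod ((a, b) - (a + t * gx, b + t * gy))) with (4 * t * M * N).
    + apply Rmult_le_compat_r with (r := 16 * M * N) in Htd; [|nra].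
      replace (d / (16 * M * N) * (16 * M * N)) with d in Htd by (field; lra); nra.
    + symmetry; unfold Cmod; apply sqrt_eq_of_sq; [left; repeat apply Rmult_lt_0_compat; lra|].
      cbn [fst snd Cminus Cplus Copp].
      replace ((4 * t * M * N) ^ 2) with (t ^ 2 * (gx ^ 2 + gy ^ 2)) by (rewrite Hg; ring).
      ring.
  - apply pot_lt_pcrit_coords; [assumption..|]; fold F.
    replace (F (a + t * gx) (b + t * gy))
      with (F a b + t * (gx ^ 2 + gy ^ 2) * (1 + (M ^ 2 - N ^ 2) * t))
      by (unfold F, level_gap, gx, gy; ring).
    rewrite HF0, Hg.
    apply Rmult_le_compat_r with (r := 2 * N ^ 2) in HtN; [|lra].
    replace (1 / (2 * N ^ 2) * (2 * N ^ 2)) with 1 in HtN by (field; lra).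
    assert (0 < (4 * M * N) ^ 2) by (apply pow_lt; nra).
    assert (0 < 1 + (M ^ 2 - N ^ 2) * t) by nra.
    rewrite Rplus_0_l; apply Rmult_lt_0_compat; [apply Rmult_lt_0_compat|]; lra.
Qed.

Lemma exists_lower_pot_near_infinity (d : R) : 0 < d ->
  exists y, chordal None y < d /\ pot y < pot None.
Proof.
  intros Hd; set (r := 2 / d + 1).
  assert (0 < 2 / d) by (apply Rdiv_lt_0_compat; lra).
  assert (0 < r) by (unfold r; lra).
  exists (Some (RtoC r)); split.
  - cbn [chordal]; rewrite Cmod_R, pow2_abs.
    assert (r < sqrt (1 + r ^ 2)).
    { rewrite <- (sqrt_pow2 r) at 1 by lra; apply sqrt_lt_1_alt; split; [apply pow2_ge_0 | lra]. }
    assert (2 < d * r) by (replace (d * r) with (2 + d) by (unfold r; field; lra); lra).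
    apply Rmult_lt_reg_r with (sqrt (1 + r ^ 2)); [lra|].
    unfold Rdiv; rewrite Rmult_assoc, Rinv_l by lra; nra.
  - rewrite pot_Some, pot_None, <- RtoC_minus, <- RtoC_plus, !Cmod_R, !pow2_abs.
    replace ((r - 1) ^ 2 / ((r - 1) ^ 2 + (r + 1) ^ 2)) with (1 / 2 - r / (1 + r ^ 2))
      by (field; nra).
    assert (0 < r / (1 + r ^ 2)) by (apply Rdiv_lt_0_compat; nra).
    lra.
Qed.

Lemma exists_lower_pot_near (M N : R) (x : sphere) (d : R) : 0 < M -> 0 < N ->
  pot x = pcrit M N -> 0 < d -> exists y, chordal x y < d /\ pot y < pcrit M N.
Proof.
  intros HM HN Hx Hd; destruct x as [z|].
  - apply exists_lower_pot_near_finite; assumption.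
  - rewrite <- Hx; apply exists_lower_pot_near_infinity, Hd.
Qed.

Lemma two_sqrt_lt (p eps : R) : 0 <= p -> 0 < eps -> p < eps ^ 2 / 4 -> 2 * sqrt p < eps.
Proof.
  intros Hp He H.
  assert (Hs : sqrt p < sqrt (eps ^ 2 / 4)) by (apply sqrt_lt_1_alt; lra).
  replace (eps ^ 2 / 4) with ((eps / 2) ^ 2) in Hs by field.
  rewrite sqrt_pow2 in Hs by lra; lra.
Qed.

(** * The Julia set *)

Section Julia_set.

Variables m n : nat.
Hypothesis Hm : (1 <= m)%nat.
Hypothesis Hn : (1 <= n)%nat.

Local Notation M := (INR m).
Local Notation N := (INR n).

Lemma fatou_below_pcrit (x : sphere) : pot x < pcrit M N -> fatou (T_mn m n) x.
Proof.
  intros Hx; pose proof (INR_pos m Hm); pose proof (INR_pos n Hn).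
  set (b := (pot x + pcrit M N) / 2).
  apply (fatou_of_uniform_limit _ (fun y => pot y < b) (Some (RtoC 1)));
    [apply sphere_open_pot_lt | unfold b; lra |].
  intros eps He.
  destruct (G_attracts_zero M N ltac:(lra) ltac:(lra) b (eps ^ 2 / 4)) as [K HK];
    [pose proof (pot_range x); unfold b; lra | nra |].
  exists K; intros k y Hk Hy.
  rewrite chordal_one; apply two_sqrt_lt; [apply pot_range | exact He |].
  rewrite pot_iter by assumption; apply HK; [exact Hk|].
  pose proof (pot_range y); lra.
Qed.

Lemma fatou_above_pcrit (x : sphere) : pcrit M N < pot x -> fatou (T_mn m n) x.
Proof.
  intros Hx; pose proof (INR_pos m Hm); pose proof (INR_pos n Hn).
  set (b := (pot x + pcrit M N) / 2).
  apply (fatou_of_uniform_limit _ (fun y => b < pot y) (Some (RtoC (-1))));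
    [apply sphere_open_pot_gt | unfold b; lra |].
  intros eps He.
  destruct (G_attracts_one M N b (eps ^ 2 / 4)) as [K HK];
    [lra | lra | pose proof (pot_range x); unfold b; lra | nra |].
  exists K; intros k y Hk Hy.
  rewrite chordal_neg_one; apply two_sqrt_lt;
    [pose proof (pot_range (Nat.iter k (T_mn m n) y)); lra | exact He |].
  rewrite pot_iter by assumption; apply HK; [exact Hk|].
  pose proof (pot_range y); lra.
Qed.

Lemma julia_on_pcrit (x : sphere) : pot x = pcrit M N -> julia (T_mn m n) x.
Proof.
  intros Hx; pose proof (INR_pos m Hm); pose proof (INR_pos n Hn).
  pose proof (pcrit_bounds M N ltac:(lra) ltac:(lra)).
  apply (julia_of_oscillation _ pot x (pcrit M N / 4) (pcrit M N / 2) pot_lipschitz); [lra|].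
  intros d K Hd.
  (* pcrit is a fixed point of G, so G^K keeps potentials close to pcrit above pcrit/2. *)
  destruct (continuity_pt_delta (Nat.iter K (G M N)) (pcrit M N) (pcrit M N / 2))
    as [delta [Hdelta Hnear]];
    [apply continuity_pt_iter_fixpoint; [apply G_continuous | apply G_pcrit]; lra | lra |].
  rewrite iter_fixpoint in Hnear by (apply G_pcrit; lra).
  destruct (exists_lower_pot_near M N x (Rmin d delta)) as [y [Hxy Hy]];
    [lra | lra | exact Hx | apply Rmin_pos; lra |].
  assert (Hd1 := Rmin_l d delta); assert (Hd2 := Rmin_r d delta).
  exists y; split; [lra|]; split.
  - rewrite pot_iter by assumption.
    assert (Hyx : Rabs (pot y - pcrit M N) < delta)
      by (rewrite <- Hx, Rabs_minus_sym; pose proof (pot_lipschitz x y); lra).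
    specialize (Hnear _ Hyx); unfold Rabs in Hnear; destruct Rcase_abs; lra.
  - destruct (G_attracts_zero M N ltac:(lra) ltac:(lra) (pot y) (pcrit M N / 4)) as [k0 Hk0];
      [pose proof (pot_range y); lra | lra |].
    exists k0; intros k Hk; rewrite pot_iter by assumption.
    apply Rlt_le, Hk0; [exact Hk | pose proof (pot_range y); lra].
Qed.

Lemma julia_iff_pcrit (x : sphere) : julia (T_mn m n) x <-> pot x = pcrit M N.
Proof.
  split; [|apply julia_on_pcrit].
  intros HJ; destruct (Rtotal_order (pot x) (pcrit M N)) as [H|[H|H]]; [| exact H |];
    exfalso; apply HJ; [apply fatou_below_pcrit | apply fatou_above_pcrit]; exact H.
Qed.

End Julia_set.

Lemma pcrit_diag (N : R) : 0 < N -> pcrit N N = 1 / 2.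
Proof. intros HN; assert (0 < N ^ 2) by (apply pow_lt; lra); unfold pcrit; field; lra. Qed.

Lemma pcrit_gt_half (M N : R) : 0 < N < M -> 1 / 2 < pcrit M N.
Proof.
  intros HNM; assert (0 < N ^ 2) by (apply pow_lt; lra); assert (N ^ 2 < M ^ 2) by nra.
  replace (pcrit M N) with (1 / 2 + (M ^ 2 - N ^ 2) / (2 * (M ^ 2 + N ^ 2)))
    by (unfold pcrit; field; lra).
  assert (0 < (M ^ 2 - N ^ 2) / (2 * (M ^ 2 + N ^ 2))) by (apply Rdiv_lt_0_compat; lra).
  lra.
Qed.

Lemma perpendicular_bisector (N : R) (z : C) : 0 < N ->
  N ^ 2 * Cmod (z - 1) ^ 2 = N ^ 2 * Cmod (z + 1) ^ 2 <-> Re z = 0.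
Proof.
  intros HN; assert (HN2 : 0 < N ^ 2) by (apply pow_lt; lra).
  assert (E : Cmod (z + 1) ^ 2 - Cmod (z - 1) ^ 2 = 4 * Re z).
  { rewrite !Cmod2_alt; destruct z as [a b]; cbn [Re Im fst snd Cminus Cplus Copp RtoC]; ring. }
  split; intros H.
  - apply Rmult_eq_reg_l in H; lra.
  - replace (Cmod (z + 1) ^ 2) with (Cmod (z - 1) ^ 2) by lra; reflexivity.
Qed.

Lemma apollonius_circle (M N : R) (z : C) : 0 < N < M ->
  N ^ 2 * Cmod (z - 1) ^ 2 = M ^ 2 * Cmod (z + 1) ^ 2 <->
  Cmod (z + RtoC ((M ^ 2 + N ^ 2) / (M ^ 2 - N ^ 2))) = 2 * M * N / (M ^ 2 - N ^ 2).
Proof.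
  intros HNM; assert (HD : 0 < M ^ 2 - N ^ 2) by nra.
  assert (HR : 0 <= 2 * M * N / (M ^ 2 - N ^ 2)) by (apply Rdiv_le_0_compat; nra).
  assert (E : (M ^ 2 - N ^ 2) * (Cmod (z + RtoC ((M ^ 2 + N ^ 2) / (M ^ 2 - N ^ 2))) ^ 2
             - (2 * M * N / (M ^ 2 - N ^ 2)) ^ 2)
           = M ^ 2 * Cmod (z + 1) ^ 2 - N ^ 2 * Cmod (z - 1) ^ 2).
  { rewrite !Cmod2_alt; destruct z as [a b]; cbn [Re Im fst snd Cminus Cplus Copp RtoC].
    field; lra. }
  assert (Hc := Cmod_ge_0 (z + RtoC ((M ^ 2 + N ^ 2) / (M ^ 2 - N ^ 2)))).
  revert E Hc HR; set (c := Cmod _); set (R := 2 * M * N / _); intros E Hc HR.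
  split; intros H.
  - rewrite <- (sqrt_pow2 c Hc), <- (sqrt_pow2 R HR); f_equal; nra.
  - rewrite H in E; lra.
Qed.

Theorem theorem1 (m n : nat) (hn : (1 <= n)%nat) (hnm : (n <= m)%nat) :
  (m = n ->
     (forall z : C, julia (T_mn m n) (Some z) <-> Re z = 0) /\
     julia (T_mn m n) None) /\
  ((n < m)%nat ->
     (forall z : C, julia (T_mn m n) (Some z) <->
        Cmod (Cplus z (RtoC ((INR m ^ 2 + INR n ^ 2) / (INR m ^ 2 - INR n ^ 2))))
          = 2 * INR m * INR n / (INR m ^ 2 - INR n ^ 2)) /\
     ~ julia (T_mn m n) None).
Proof.
  assert (hm : (1 <= m)%nat) by lia.
  assert (HN := INR_pos n hn).
  split.
  - intros ->; split.
    + intros z; rewrite julia_iff_pcrit, pot_eq_pcrit_iff by assumption.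
      apply perpendicular_bisector, HN.
    + rewrite julia_iff_pcrit, pot_None, pcrit_diag by assumption; reflexivity.
  - intros Hlt; assert (HNM : INR n < INR m) by (apply lt_INR; exact Hlt); split.
    + intros z; rewrite julia_iff_pcrit, pot_eq_pcrit_iff by (assumption || lra).
      apply apollonius_circle; lra.
    + rewrite julia_iff_pcrit, pot_None by assumption.
      pose proof (pcrit_gt_half (INR m) (INR n) ltac:(lra)); lra.
Qed.
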